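(* Let $G$ be a group and $A\subseteq G$ a nonempty finite set. Suppose $H$ is a finite subgroup of $G$ such that $H\subseteq\operatorname{Stab}^r_N(A)$ for some $N>0$. Then there is a set $D\subseteq G$ which is a union of left cosets of $H$ such that $|A\triangle D|\leq N$.
   Context: $\operatorname{Stab}^r_N(A)=\{x\in G:|Ax\triangle A|\leq N\}$, where $\triangle$ denotes symmetric difference. *)

(* G is an arbitrary (possibly infinite) group, modelled by
   MathComp's [groupType] (boot/monoid.v).  Subsets of G are predicates
   [G -> Prop]. *)
From mathcomp Require Import all_boot monoid.
Set Implicit Arguments. Unset Strict Implicit. Unset Printing Implicit Defensive.

Local Open Scope group_scope.
Local Notation "x * y" := (monoid.mul x y) : group_scope.
Local Notation "1" := (@monoid.one _) : group_scope.
Local Notation "x ^-1" := (monoid.inv x) : group_scope.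

Section Defs.
Variable G : groupType.

Definition finite_set (S : G -> Prop) : Prop :=
  exists l : seq G, forall x, S x <-> x \in l.

Definition card_le (S : G -> Prop) (N : nat) : Prop :=
  exists l : seq G, (size l <= N)%N /\ forall x, S x -> x \in l.

Definition symdiff (A B : G -> Prop) : G -> Prop :=
  fun x => (A x /\ ~ B x) \/ (B x /\ ~ A x).

Definition rtrans (A : G -> Prop) (x : G) : G -> Prop :=
  fun y => exists a, A a /\ y = a * x.

Definition StabR (N : nat) (A : G -> Prop) : G -> Prop :=
  fun x => card_le (symdiff (rtrans A x) A) N.

Definition is_subgroup (H : G -> Prop) : Prop :=
  H 1 /\ forall x y, H x -> H y -> H (x * y^-1).

Definition union_left_cosets (H D : G -> Prop) : Prop :=
  exists S : G -> Prop,
    forall x, D x <-> exists g h, S g /\ H h /\ x = g * h.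

End Defs.

From mathcomp Require Import all_boot monoid.
From mathcomp Require Import zify.

(* Let m = |H| and, for a coset yH, let c = |yH ∩ A|. Take for D the union of
   the cosets in which A has a strict majority. The sum of |Ah^-1 △ A| over
   h ∈ H counts, inside each coset, the ordered pairs of points exactly one of
   which lies in A, i.e. 2c(m - c) pairs per coset, and it is at most mN. Each
   coset contributes min(c, m - c) points to A △ D, and
   m min(c, m - c) <= 2c(m - c), so m |A △ D| <= mN. *)

Set Implicit Arguments.
Unset Strict Implicit.
Unset Printing Implicit Defensive.

Lemma perm_map_closed (T : eqType) (s : seq T) (f : T -> T) :
  uniq s -> injective f -> {in s, forall x, f x \in s} -> perm_eq s (map f s).
Proof.
move=> s_uniq f_inj f_s.
have fs_uniq : uniq (map f s) by rewrite map_inj_uniq.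
have fs_sub : {subset map f s <= s} by move=> _ /mapP[x xs ->]; exact: f_s.
have [_ eq_s] := uniq_min_size fs_uniq fs_sub (eq_leq (esym (size_map f s))).
by apply: uniq_perm => // y; rewrite eq_s.
Qed.

Lemma sum_nat_count (T : Type) (s : seq T) (a : pred T) :
  \sum_(x <- s) a x = count a s.
Proof. by rewrite -sumn_count sumnE big_map. Qed.

Lemma sum_nat_const_seq (T : Type) (s : seq T) (k : nat) :
  \sum_(x <- s) k = size s * k.
Proof. by rewrite big_const_seq count_predT iter_addn_0 mulnC. Qed.

Lemma sum_if_count (T : Type) (s : seq T) (a : pred T) (k l : nat) :
  \sum_(x <- s) (if a x then k else l) = count a s * k + count (predC a) s * l.
Proof.
elim: s => [|x s IHs]; first by rewrite big_nil.
by rewrite big_cons IHs /=; case: (a x) => /=; lia.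
Qed.

Lemma leq_mul_minn_subn (m c : nat) :
  c <= m -> m * minn c (m - c) <= 2 * (c * (m - c)).
Proof. by move/subnKC=> <-; rewrite addKn; case: leqP => ?; nia. Qed.

Section FiniteSets.

Variable G : groupType.

Lemma finite_set_uniq (S : G -> Prop) :
  finite_set S -> exists s, uniq s /\ forall x, S x <-> x \in s.
Proof.
move=> [s Ss]; exists (undup s); split; first exact: undup_uniq.
by move=> x; rewrite mem_undup.
Qed.

Lemma finite_subgroup_seq (H : G -> Prop) :
  is_subgroup H -> finite_set H ->
  exists s, [/\ uniq s, forall x, H x <-> x \in s, 1%g \in s,
                {in s &, forall x y, (x * y)%g \in s}
              & {in s, forall x, x^-1%g \in s}].
Proof.
move=> [H1 H_div] /finite_set_uniq[s [s_uniq Hs]].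
have s_inv : {in s, forall x, x^-1%g \in s}.
  by move=> x /Hs Hx; apply/Hs; have := H_div _ _ H1 Hx; rewrite mul1g.
exists s; split=> //; first exact/Hs.
move=> x y /Hs Hx /s_inv /Hs Hy'; apply/Hs.
by have := H_div _ _ Hx Hy'; rewrite invgK.
Qed.

Lemma count_le_card_le (S : G -> Prop) (s : seq G) (p : pred G) N :
  card_le S N -> uniq s -> (forall y, p y -> S y) -> count p s <= N.
Proof.
move=> [l [size_l Sl]] s_uniq pS; rewrite -size_filter.
apply: leq_trans size_l; apply: uniq_leq_size; first exact: filter_uniq.
by move=> y; rewrite mem_filter => /andP[/pS/Sl].
Qed.

Lemma symdiff_rtransV (A : G -> Prop) (a : pred G) x y :
  (forall z, A z <-> a z) ->
  a (y * x)%g != a y -> symdiff (rtrans A x^-1%g) A y.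
Proof.
move=> Aa; case ayx: (a (y * x)%g); case: (boolP (a y)) => //= ay _.
  left; split; last by move/Aa; rewrite (negbTE ay).
  by exists (y * x)%g; split; [exact/Aa | rewrite mulgK].
right; split; first exact/Aa.
by move=> [z [/Aa az yE]]; rewrite yE mulgVK az in ayx.
Qed.

Lemma symdiff_pred_neq (A : G -> Prop) (a d : pred G) y :
  (forall z, A z <-> a z) -> symdiff A d y -> a y != d y.
Proof.
move=> Aa [[/Aa ay /negP/negbTE dy] | [dy /Aa/negP/negbTE ay]];
  by rewrite ay dy.
Qed.

End FiniteSets.

Section Cosets.

Variable G : groupType.
Variable H : seq G.
Hypothesis H_uniq : uniq H.
Hypothesis H1 : 1%g \in H.
Hypothesis H_mul : {in H &, forall x y, (x * y)%g \in H}.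
Hypothesis H_inv : {in H, forall x, x^-1%g \in H}.

Local Notation m := (size H).

Lemma size_subgroup_gt0 : 0 < m.
Proof. by case: H H1. Qed.

Lemma perm_lmul h : h \in H -> perm_eq H (map (fun k => h * k)%g H).
Proof.
move=> Hh; apply: perm_map_closed => //; first exact: mulgI.
by move=> k; apply: H_mul.
Qed.

Lemma sum_over_cosets (U : seq G) (F : G -> nat) :
  uniq U -> {in U & H, forall y h, (y * h)%g \in U} ->
  \sum_(y <- U) m * F y = \sum_(y <- U) \sum_(h <- H) F (y * h)%g.
Proof.
move=> U_uniq U_rmul; rewrite exchange_big /= -big_distrr /=.
rewrite -sum_nat_const_seq; apply: eq_big_seq => h Hh.
have U_perm : perm_eq U (map (fun y => y * h)%g U).
  by apply: perm_map_closed => // [|y Uy]; [exact: mulIg | exact: U_rmul].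
by rewrite (perm_big _ U_perm) big_map.
Qed.

Definition coset_count (P : pred G) (y : G) : nat :=
  count (fun h => P (y * h)%g) H.

Definition majority (P : pred G) (y : G) : bool := m < 2 * coset_count P y.

Definition mismatch (P : pred G) (y : G) : nat :=
  count (fun h => P (y * h)%g != P y) H.

Lemma coset_count_le (P : pred G) y : coset_count P y <= m.
Proof. exact: count_size. Qed.

Lemma coset_count_rmul (P : pred G) y h :
  h \in H -> coset_count P (y * h) = coset_count P y.
Proof.
move=> Hh; rewrite /coset_count [in RHS](permP (perm_lmul Hh)) count_map.
by apply: eq_count => k /=; rewrite mulgA.
Qed.

Lemma majority_rmul (P : pred G) y h :
  h \in H -> majority P (y * h) = majority P y.
Proof. by move=> Hh; rewrite /majority coset_count_rmul. Qed.

Lemma coset_count_neq (P : pred G) (b : bool) y :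
  coset_count (fun z => P z != b) y
  = if b then m - coset_count P y else coset_count P y.
Proof.
rewrite /coset_count -(count_predC (fun h => P (y * h)%g) H).
by case: b; [rewrite addKn | ]; apply: eq_count => h /=; case: (P _).
Qed.

Lemma sum_coset_neq_majority (P : pred G) y :
  \sum_(h <- H) (P (y * h)%g != majority P (y * h)%g)
  = minn (coset_count P y) (m - coset_count P y).
Proof.
under eq_big_seq => h Hh do rewrite majority_rmul //.
rewrite sum_nat_count -/(coset_count (fun z => P z != majority P y) y).
rewrite coset_count_neq.
by have := coset_count_le P y; rewrite /majority; case: ltnP => ? ?; lia.
Qed.

Lemma sum_coset_mismatch (P : pred G) y :
  \sum_(h <- H) mismatch P (y * h)%g
  = 2 * (coset_count P y * (m - coset_count P y)).
Proof.
rewrite (eq_big_seq (fun h => if P (y * h)%g then m - coset_count P y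
                                             else coset_count P y)); last first.
  by move=> h Hh; rewrite -coset_count_neq -(coset_count_rmul _ _ Hh).
rewrite sum_if_count; have := count_predC (fun h => P (y * h)%g) H.
rewrite -/(coset_count P y) => <-.
by rewrite addKn [_ * coset_count P y]mulnC addnn mul2n.
Qed.

Lemma count_neq_majority_le (P : pred G) (U : seq G) N :
  uniq U -> {in U & H, forall y h, (y * h)%g \in U} ->
  (forall h, h \in H -> count (fun y => P (y * h)%g != P y) U <= N) ->
  count (fun y => P y != majority P y) U <= N.
Proof.
move=> U_uniq U_rmul stab.
have sum_mismatch : \sum_(y <- U) mismatch P y <= m * N.
  rewrite (eq_bigr (fun y => \sum_(h <- H) (P (y * h)%g != P y))); last first.
    by move=> y _; rewrite sum_nat_count.
  rewrite exchange_big /= -sum_nat_const_seq big_seq [leqRHS]big_seq.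
  by apply: leq_sum => h Hh; rewrite sum_nat_count; exact: stab.
rewrite -(leq_pmul2l size_subgroup_gt0) -(leq_pmul2l size_subgroup_gt0).
apply: leq_trans (leq_mul (leqnn m) sum_mismatch).
rewrite [leqRHS]big_distrr [leqRHS]sum_over_cosets //.
rewrite -sum_nat_count big_distrr sum_over_cosets // big_distrr.
apply: leq_sum => y _.
rewrite sum_coset_neq_majority sum_coset_mismatch.
by rewrite leq_mul_minn_subn ?coset_count_le.
Qed.

Lemma majority_union_left_cosets (K : G -> Prop) (P : pred G) :
  (forall x, K x <-> x \in H) -> union_left_cosets K (majority P).
Proof.
move=> KH; exists (majority P) => x; split.
  by move=> Dx; exists x, 1%g; rewrite mulg1; split; [|split; [exact/KH|]].
by move=> [g [h [Dg [/KH Hh ->]]]]; rewrite majority_rmul.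
Qed.

Definition coset_closure (s : seq G) : seq G :=
  undup [seq (a * h)%g | a <- s, h <- H].

Lemma coset_closure_uniq (s : seq G) : uniq (coset_closure s).
Proof. exact: undup_uniq. Qed.

Lemma coset_closure_rmul (s : seq G) :
  {in coset_closure s & H, forall y h, (y * h)%g \in coset_closure s}.
Proof.
move=> y h; rewrite mem_undup => /allpairsP[[a k] [/= sa Hk ->]] Hh.
rewrite mem_undup; apply/allpairsP; exists (a, (k * h)%g).
by rewrite /= mulgA; split=> //; exact: H_mul.
Qed.

Lemma mem_coset_closure (s : seq G) y : y \in s -> y \in coset_closure s.
Proof.
move=> sy; rewrite mem_undup; apply/allpairsP.
by exists (y, 1%g); rewrite mulg1.
Qed.

Lemma neq_majority_coset_closure (s : seq G) y :
  (y \in s) != majority (fun z => z \in s) y -> y \in coset_closure s.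
Proof.
case: (boolP (y \in s)) => [sy _ | _ /= Dy]; first exact: mem_coset_closure.
have : 0 < coset_count (fun z => z \in s) y.
  move: Dy; rewrite /majority.
  by case: (coset_count _ _) => //; rewrite muln0 ltn0.
rewrite -has_count => /hasP[h Hh syh].
rewrite -(mulgK h y); apply: coset_closure_rmul; last exact: H_inv.
exact: mem_coset_closure.
Qed.

End Cosets.

Theorem lemma6p2 (G : groupType) (A H : G -> Prop) (N : nat) :
  (exists a, A a) -> finite_set A ->
  is_subgroup H -> finite_set H ->
  (0 < N)%N ->
  (forall x, H x -> StabR N A x) ->
  exists D : G -> Prop, union_left_cosets H D /\ card_le (symdiff A D) N.
Proof.
move=> _ /finite_set_uniq[sA [_ AsA]] H_sub H_fin _ stab.
have [sH [sH_uniq HsH sH1 sH_mul sH_inv]] := finite_subgroup_seq H_sub H_fin.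
pose P z := z \in sA.
pose U := coset_closure sH sA.
have U_uniq : uniq U by exact: coset_closure_uniq.
have U_rmul : {in U & sH, forall y h, (y * h)%g \in U}.
  exact: coset_closure_rmul.
exists (majority sH P); split; first exact: majority_union_left_cosets.
exists (filter (fun y => P y != majority sH P y) U); split.
  rewrite size_filter; apply: count_neq_majority_le => // h sHh.
  apply: count_le_card_le (stab _ (proj2 (HsH _) (sH_inv _ sHh))) U_uniq _.
  by move=> y; apply: symdiff_rtransV.
move=> y /(symdiff_pred_neq AsA) neq_y; rewrite mem_filter neq_y.
exact: neq_majority_coset_closure.
Qed.
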